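(* Let $\Lambda,\delta>0$ and $T=L(\Lambda+1)\delta$ with $L\in\mathbb N$. The minimizers of $\mathcal F^T_0$ in $\mathscr A^{T,\Lambda,\delta}$ are exactly the functions $\bar u(\cdot-x_0)-\frac{\Lambda\delta}2$ with $x_0\in\mathbb R$.
   Context: The admissible class $\mathscr A^{T,\Lambda,\delta}$ is the set of continuous, $T$-periodic, piecewise affine functions $u:\mathbb R\to\mathbb R$ with $u'\in\{1,-\Lambda\}$ a.e., such that $(u')^{-1}(\{-\Lambda\})=\bigcup_{k\in\mathbb N}I^k$ for some intervals $I^k$ with $|I^k|=\delta$ for all $k$ and $\#(I^i\cap I^j)\le1$ for all $i\ne j$. The functional is $\mathcal F^T_0(u):=\frac1{2T}\int_0^T|u(x)|^2\,dx$. $\bar u$ is the $(\Lambda+1)\delta$-periodic function defined on $(-\delta,\Lambda\delta]$ by $\bar u(x)=-\Lambda x$ for $-\delta<x<0$ and $\bar u(x)=x$ for $0\le x\le\Lambda\delta$. *)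

From Stdlib Require Import Reals Lra.
From Coquelicot Require Import Coquelicot.
Open Scope R_scope.

Definition periodic (T : R) (u : R -> R) : Prop :=
  forall x, u (x + T) = u x.

Definition piecewise_affine (u : R -> R) : Prop :=
  forall a b, a < b ->
    exists (n : nat) (t : nat -> R),
      t 0%nat = a /\ t n = b /\
      (forall i, (i < n)%nat -> t i < t (S i)) /\
      (forall i, (i < n)%nat -> exists m c,
          forall x, t i <= x <= t (S i) -> u x = m * x + c).

Definition in_Ival (delta a x : R) : Prop := a <= x <= a + delta.

(* The admissible class A^{T,Lambda,delta}.  The a.e. statements are read at
   points of differentiability (the complement is locally finite, hence null). *)
Definition admissible (T Lambda delta : R) (u : R -> R) : Prop :=
  continuity u /\ periodic T u /\ piecewise_affine u /\
  (forall x l, derivable_pt_lim u x l -> l = 1 \/ l = - Lambda) /\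
  exists I : nat -> R,
    (forall i j, i <> j -> forall x y,
        in_Ival delta (I i) x -> in_Ival delta (I j) x ->
        in_Ival delta (I i) y -> in_Ival delta (I j) y -> x = y) /\
    (forall x l, derivable_pt_lim u x l ->
        (l = - Lambda <-> exists k, in_Ival delta (I k) x)).

Definition F0 (T : R) (u : R -> R) : R :=
  / (2 * T) * RInt (fun x => (u x) ^ 2) 0 T.

Definition is_minimizer (T Lambda delta : R) (u : R -> R) : Prop :=
  admissible T Lambda delta u /\
  forall v, admissible T Lambda delta v -> F0 T u <= F0 T v.

(* Representative of x modulo P=(Lambda+1)delta in (-delta, Lambda*delta]. *)
Definition ubar_red (Lambda delta x : R) : R :=
  let P := (Lambda + 1) * delta in
  Lambda * delta - P * frac_part ((Lambda * delta - x) / P).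

Definition ubar (Lambda delta x : R) : R :=
  let y := ubar_red Lambda delta x in
  if Rlt_dec y 0 then - Lambda * y else y.

(* An admissible u descends with slope -Λ on its intervals and ascends with slope 1
   elsewhere.  Let s_0 < s_1 < ... be the consecutive left endpoints of the intervals and
   h_j = u(s_j).  The cell [s_j, s_(j+1)] is a descent of length δ followed by an ascent,
   so its length is (Λ+1)δ + h_(j+1) - h_j and an explicit integration gives
     ∫_(cell) u² = (Λ+1)δ ((h_j - Λδ/2)² + (Λδ)²/12) + (h_(j+1)³ - h_j³)/3.
   Summing over one period the telescoping terms vanish, so T = N(Λ+1)δ and
     F_0^T(u) = (Λδ)²/24 + (Λ+1)δ/(2T) Σ_j (h_j - Λδ/2)².
   Hence F_0^T ≥ (Λδ)²/24, with equality iff every h_j = Λδ/2, i.e. every ascent has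
   length Λδ: u is then a translate of ū - Λδ/2, and these translates attain the bound. *)

From Stdlib Require Import Reals Lra Lia ZArith Classical ClassicalEpsilon FunctionalExtensionality.
From Coquelicot Require Import Coquelicot.
Open Scope R_scope.

(** * Affine pieces, slopes and periodicity *)

Lemma affine_derivable_pt_lim (u : R -> R) a b m c p :
  a < p < b -> (forall x, a <= x <= b -> u x = m * x + c) -> derivable_pt_lim u p m.
Proof.
  intros Hp Hu eps Heps.
  assert (Hd : 0 < Rmin (p - a) (b - p)) by (apply Rmin_pos; lra).
  exists (mkposreal _ Hd). intros h Hh0 Hh. simpl in Hh.
  assert (Hh1 : Rabs h < p - a) by (eapply Rlt_le_trans; [exact Hh | apply Rmin_l]).
  assert (Hh2 : Rabs h < b - p) by (eapply Rlt_le_trans; [exact Hh | apply Rmin_r]).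
  destruct (Rabs_def2 _ _ Hh1), (Rabs_def2 _ _ Hh2).
  rewrite (Hu (p + h)), (Hu p) by lra.
  replace ((m * (p + h) + c - (m * p + c)) / h - m) with 0 by (field; auto).
  rewrite Rabs_R0; lra.
Qed.

Lemma Req_of_Rabs_lt (l m : R) : (forall eps, 0 < eps -> Rabs (m - l) < eps) -> l = m.
Proof.
  intros H. destruct (Req_dec l m) as [E | E]; auto.
  assert (Hpos : 0 < Rabs (m - l)) by (apply Rabs_pos_lt; lra).
  specialize (H _ Hpos). lra.
Qed.

Lemma affine_right_derivable_pt_lim_eq (u : R -> R) x eta m c l : 0 < eta ->
  (forall y, x <= y <= x + eta -> u y = m * y + c) -> derivable_pt_lim u x l -> l = m.
Proof.
  intros He Hu Hd. apply Req_of_Rabs_lt. intros eps Heps.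
  destruct (Hd eps Heps) as [d Hdd].
  set (h := Rmin (d / 2) eta).
  assert (0 < h) by (apply Rmin_pos; destruct d; simpl; lra).
  assert (h <= d / 2) by apply Rmin_l. assert (h <= eta) by apply Rmin_r.
  assert (Hh : Rabs h < d) by (rewrite Rabs_right; destruct d; simpl in *; lra).
  specialize (Hdd h ltac:(lra) Hh).
  rewrite (Hu (x + h)), (Hu x) in Hdd by lra.
  replace ((m * (x + h) + c - (m * x + c)) / h - l) with (m - l) in Hdd by (field; lra).
  exact Hdd.
Qed.

Lemma affine_left_derivable_pt_lim_eq (u : R -> R) x eta m c l : 0 < eta ->
  (forall y, x - eta <= y <= x -> u y = m * y + c) -> derivable_pt_lim u x l -> l = m.
Proof.
  intros He Hu Hd. apply Req_of_Rabs_lt. intros eps Heps.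
  destruct (Hd eps Heps) as [d Hdd].
  set (h := Rmin (d / 2) eta).
  assert (0 < h) by (apply Rmin_pos; destruct d; simpl; lra).
  assert (h <= d / 2) by apply Rmin_l. assert (h <= eta) by apply Rmin_r.
  assert (Hh : Rabs (- h) < d) by (rewrite Rabs_left; destruct d; simpl in *; lra).
  specialize (Hdd (- h) ltac:(lra) Hh).
  rewrite (Hu (x + - h)), (Hu x) in Hdd by lra.
  replace ((m * (x + - h) + c - (m * x + c)) / - h - l) with (m - l) in Hdd by (field; lra).
  exact Hdd.
Qed.

Lemma affine_sides_continuity_pt (w : R -> R) x eta m1 c1 m2 c2 : 0 < eta ->
  (forall y, x - eta <= y <= x -> w y = m1 * y + c1) ->
  (forall y, x <= y <= x + eta -> w y = m2 * y + c2) -> continuity_pt w x.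
Proof.
  intros He H1 H2 eps Heps.
  set (M := Rabs m1 + Rabs m2 + 1).
  pose proof (Rabs_pos m1). pose proof (Rabs_pos m2).
  assert (0 < M) by (unfold M; lra).
  exists (Rmin eta (eps / M)). split; [apply Rmin_pos; [lra | apply Rdiv_lt_0_compat; lra] |].
  intros y [_ Hy]. simpl in *. unfold Rdist in *.
  assert (Hy1 : Rabs (y - x) < eta) by (eapply Rlt_le_trans; [exact Hy | apply Rmin_l]).
  assert (Hy2 : Rabs (y - x) * M < eps).
  { apply (Rmult_lt_reg_r (/ M)); [apply Rinv_0_lt_compat; lra |].
    rewrite Rmult_assoc, Rinv_r by lra. rewrite Rmult_1_r.
    eapply Rlt_le_trans; [exact Hy | apply Rmin_r]. }
  destruct (Rabs_def2 _ _ Hy1). pose proof (Rabs_pos (y - x)).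
  destruct (Rle_or_lt y x).
  - rewrite (H1 y), (H1 x) by lra. replace (m1 * y + c1 - (m1 * x + c1)) with (m1 * (y - x)) by ring.
    rewrite Rabs_mult. unfold M in Hy2. nra.
  - rewrite (H2 y), (H2 x) by lra. replace (m2 * y + c2 - (m2 * x + c2)) with (m2 * (y - x)) by ring.
    rewrite Rabs_mult. unfold M in Hy2. nra.
Qed.

Definition piecewise_affine_on (u : R -> R) a b := exists (n : nat) (t : nat -> R),
  t 0%nat = a /\ t n = b /\
  (forall i, (i < n)%nat -> t i < t (S i)) /\
  (forall i, (i < n)%nat -> exists m c, forall x, t i <= x <= t (S i) -> u x = m * x + c).

Lemma increasing_partition_bounds (t : nat -> R) n :
  (forall i, (i < n)%nat -> t i < t (S i)) ->
  forall j, (j <= n)%nat -> t 0%nat <= t j <= t n.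
Proof.
  intros Hinc j Hj. split.
  - induction j as [| j IH]; [lra |].
    specialize (Hinc j ltac:(lia)). specialize (IH ltac:(lia)). lra.
  - remember (n - j)%nat as d. assert (j = n - d)%nat by lia. subst j. clear Heqd Hj.
    induction d as [| d IH]; [rewrite Nat.sub_0_r; lra |].
    destruct (Nat.le_gt_cases n d).
    + replace (n - S d)%nat with (n - d)%nat by lia. exact IH.
    + specialize (Hinc (n - S d)%nat ltac:(lia)).
      replace (S (n - S d)) with (n - d)%nat in Hinc by lia. lra.
Qed.

(** Between the breakpoints the derivative exists, so one slope everywhere makes [u] affine. *)
Lemma piecewise_affine_const_slope u a b m : piecewise_affine u -> a < b ->
  (forall t l, a < t < b -> derivable_pt_lim u t l -> l = m) ->
  forall x, a <= x <= b -> u x = u a + m * (x - a).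
Proof.
  intros Hpa Hab Hd.
  destruct (Hpa a b Hab) as [n [t [H0 [Hn [Hinc Haff]]]]].
  pose proof (increasing_partition_bounds t n Hinc) as Hb.
  assert (Hj : forall j, (j <= n)%nat -> forall x, a <= x <= t j -> u x = u a + m * (x - a)).
  { induction j as [| j IH]; intros Hj x Hx.
    - rewrite H0 in Hx. replace x with a by lra. ring.
    - destruct (Rle_lt_dec x (t j)); [apply IH; lia || lra |].
      destruct (Haff j ltac:(lia)) as [mj [cj Hc]].
      specialize (Hinc j ltac:(lia)). destruct (Hb j ltac:(lia)), (Hb (S j) ltac:(lia)).
      assert (mj = m).
      { apply (Hd ((t j + t (S j)) / 2)); [lra |].
        apply (affine_derivable_pt_lim u (t j) (t (S j)) mj cj); [lra | exact Hc]. }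
      subst mj.
      assert (Htj : u (t j) = u a + m * (t j - a)) by (apply IH; lia || lra).
      rewrite Hc by lra. rewrite Hc in Htj by lra. lra. }
  intros x Hx. apply (Hj n); lia || lra.
Qed.

Lemma piecewise_affine_on_affine u a b m c :
  a < b -> (forall x, a <= x <= b -> u x = m * x + c) -> piecewise_affine_on u a b.
Proof.
  intros Hab Hu. exists 1%nat, (fun i => match i with O => a | _ => b end).
  repeat split; auto.
  - intros i Hi. destruct i; [auto | lia].
  - intros i Hi. destruct i; [| lia]. exists m, c. auto.
Qed.

Lemma piecewise_affine_on_trans u a b c :
  piecewise_affine_on u a b -> piecewise_affine_on u b c -> piecewise_affine_on u a c.
Proof.
  intros [n1 [t1 [A1 [B1 [C1 D1]]]]] [n2 [t2 [A2 [B2 [C2 D2]]]]].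
  set (t := fun i => if (i <=? n1)%nat then t1 i else t2 (i - n1)%nat).
  assert (Hr : forall i, (n1 <= i)%nat -> t i = t2 (i - n1)%nat).
  { intros i Hi. unfold t. destruct (Nat.leb_spec i n1); [| auto].
    replace i with n1 by lia. rewrite Nat.sub_diag. congruence. }
  assert (Hl : forall i, (i < n1)%nat -> t i = t1 i /\ t (S i) = t1 (S i)).
  { intros i Hi. unfold t. destruct (Nat.leb_spec i n1), (Nat.leb_spec (S i) n1); auto; lia. }
  exists (n1 + n2)%nat, t. split; [exact A1 |]. split.
  { rewrite Hr by lia. replace (n1 + n2 - n1)%nat with n2 by lia. exact B2. }
  split; intros i Hi; destruct (Nat.lt_ge_cases i n1) as [Hi1 | Hi1].
  - destruct (Hl i Hi1) as [-> ->]. auto.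
  - rewrite !Hr by lia. replace (S i - n1)%nat with (S (i - n1)) by lia. apply C2. lia.
  - destruct (Hl i Hi1) as [-> ->]. auto.
  - rewrite !Hr by lia. replace (S i - n1)%nat with (S (i - n1)) by lia. apply D2. lia.
Qed.

Lemma piecewise_affine_of_short u th : 0 < th ->
  (forall a b, a < b <= a + th -> piecewise_affine_on u a b) -> piecewise_affine u.
Proof.
  intros Hth Hl.
  assert (Hn : forall n a b, a < b <= a + INR n * th -> piecewise_affine_on u a b).
  { induction n as [| n IH]; intros a b Hab; [simpl in Hab; lra |].
    rewrite S_INR in Hab. destruct (Rle_or_lt b (a + th)); [apply Hl; lra |].
    apply piecewise_affine_on_trans with (a + th); [apply Hl | apply IH]; lra. }
  intros a b Hab. destruct (INR_archimed th (b - a) Hth) as [n Hn']. apply (Hn n). lra.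
Qed.

Lemma periodic_nat_mul T f : periodic T f -> forall n x, f (x + INR n * T) = f x.
Proof.
  intros Hp n. induction n as [| n IH]; intros x.
  - simpl. rewrite Rmult_0_l, Rplus_0_r. reflexivity.
  - rewrite S_INR. replace (x + (INR n + 1) * T) with ((x + INR n * T) + T) by ring.
    rewrite Hp. apply IH.
Qed.

Lemma periodic_Z_mul T f : periodic T f -> forall (z : Z) x, f (x + IZR z * T) = f x.
Proof.
  intros Hp z x. destruct (Z.le_gt_cases 0 z).
  - rewrite <- (Z2Nat.id z) by lia. rewrite <- INR_IZR_INZ. apply periodic_nat_mul; auto.
  - replace z with (- Z.of_nat (Z.to_nat (- z)))%Z by lia. rewrite opp_IZR, <- INR_IZR_INZ.
    rewrite <- (periodic_nat_mul T f Hp (Z.to_nat (- z)) (x + - INR (Z.to_nat (- z)) * T)).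
    f_equal. ring.
Qed.

Lemma periodic_derivable_pt_lim T f t l :
  periodic T f -> derivable_pt_lim f t l -> derivable_pt_lim f (t + T) l.
Proof.
  intros Hp Hd eps Heps. destruct (Hd eps Heps) as [d Hdd]. exists d. intros h Hh0 Hh.
  replace (t + T + h) with ((t + h) + T) by ring. rewrite !Hp. auto.
Qed.

Lemma periodic_nat_derivable_pt_lim T f n t l :
  periodic T f -> derivable_pt_lim f t l -> derivable_pt_lim f (t + INR n * T) l.
Proof.
  intros Hp Hd eps Heps. destruct (Hd eps Heps) as [d Hdd]. exists d. intros h Hh0 Hh.
  replace (t + INR n * T + h) with ((t + h) + INR n * T) by ring.
  rewrite !(periodic_nat_mul T f Hp). auto.
Qed.

Lemma Z_window a P x : 0 < P -> exists z : Z, a <= x + IZR z * P <= a + P.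
Proof.
  intros HP. destruct (archimed ((x - a) / P)) as [A B].
  exists (1 - up ((x - a) / P))%Z. rewrite minus_IZR.
  set (r := IZR (up ((x - a) / P))) in *.
  assert (E : (x - a) / P * P = x - a) by (field; lra).
  split; nra.
Qed.

Lemma periodic_eq_of_window f g T a : 0 < T -> periodic T f -> periodic T g ->
  (forall y, a <= y <= a + T -> f y = g y) -> forall x, f x = g x.
Proof.
  intros HT Hf Hg Hfg x. destruct (Z_window a T x HT) as [z Hz].
  rewrite <- (periodic_Z_mul T f Hf z x), <- (periodic_Z_mul T g Hg z x). auto.
Qed.

Lemma is_RInt_affine_sq a b c m : m <> 0 ->
  is_RInt (fun x => (c + m * (x - a)) ^ 2) a b (((c + m * (b - a)) ^ 3 - c ^ 3) / (3 * m)).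
Proof.
  intros Hm.
  set (F := fun x => (c + m * (x - a)) ^ 3 / (3 * m)).
  replace (((c + m * (b - a)) ^ 3 - c ^ 3) / (3 * m)) with (minus (F b) (F a))
    by (unfold F, minus, plus, opp; simpl; field; auto).
  apply (is_RInt_derive F).
  - intros x _. unfold F. auto_derive; [auto | field; auto].
  - intros x _. apply (ex_derive_continuous (fun x => (c + m * (x - a)) ^ 2)). auto_derive. auto.
Qed.

Lemma continuous_sq (u : R -> R) : continuity u -> forall x, continuous (fun x => u x ^ 2) x.
Proof.
  intros Hc x. apply continuity_pt_filterlim.
  change (continuity_pt (fun x => u x * (u x * 1)) x).
  apply continuity_pt_mult; [apply Hc |].
  apply continuity_pt_mult; [apply Hc | apply continuity_pt_const; intros ? ?; auto].
Qed.

Lemma RInt_periodic_shift (f : R -> R) T a : periodic T f -> (forall x, continuous f x) ->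
  RInt f 0 T = RInt f a (a + T).
Proof.
  intros Hp Hc.
  assert (Ex : forall p q, ex_RInt f p q)
    by (intros; apply (@ex_RInt_continuous R_CompleteNormedModule); auto).
  pose proof (RInt_Chasles f 0 a (a + T) (Ex _ _) (Ex _ _)) as C1.
  pose proof (RInt_Chasles f 0 T (a + T) (Ex _ _) (Ex _ _)) as C2.
  pose proof (RInt_comp_lin f 1 T 0 a (Ex _ _)) as Hlin.
  replace (1 * 0 + T) with T in Hlin by ring. replace (1 * a + T) with (a + T) in Hlin by ring.
  match type of Hlin with ?X = _ => assert (Hshift : X = RInt f 0 a) end.
  { apply RInt_ext. intros x _. unfold scal; simpl. unfold mult; simpl.
    rewrite !Rmult_1_l. apply Hp. }
  rewrite Hshift in Hlin. rewrite <- Hlin in C2. unfold plus in *; simpl in *. lra.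
Qed.

Fixpoint sum_sq (f : nat -> R) (n : nat) : R :=
  match n with O => 0 | S n => sum_sq f n + f n ^ 2 end.

Lemma sum_sq_ge0 f n : 0 <= sum_sq f n.
Proof. induction n; simpl; nra. Qed.

Lemma sum_sq_le0 f n : sum_sq f n <= 0 -> forall j, (j < n)%nat -> f j = 0.
Proof.
  induction n as [| n IH]; intros Hs j Hj; [lia |]. simpl in Hs.
  pose proof (sum_sq_ge0 f n).
  destruct (Nat.eq_dec j n) as [-> | Hjn]; [nra |]. apply IH; [nra | lia].
Qed.

Lemma sum_sq_eq0 f n : (forall j, (j < n)%nat -> f j = 0) -> sum_sq f n = 0.
Proof.
  induction n as [| n IH]; intros Hz; simpl; [reflexivity |].
  rewrite IH, Hz by (intros; try apply Hz; lia). ring.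
Qed.

(** * The structure of an admissible profile *)

Record admissible_with (Lam del T : R) (u : R -> R) (I : nat -> R) : Prop := {
  Lam_pos : 0 < Lam; del_pos : 0 < del; period_pos : 0 < T;
  adm_continuity : continuity u; adm_periodic : periodic T u;
  adm_piecewise_affine : piecewise_affine u;
  adm_slopes : forall x l, derivable_pt_lim u x l -> l = 1 \/ l = - Lam;
  adm_overlap : forall i j, i <> j -> forall x y,
    in_Ival del (I i) x -> in_Ival del (I j) x ->
    in_Ival del (I i) y -> in_Ival del (I j) y -> x = y;
  adm_descent : forall x l, derivable_pt_lim u x l ->
    (l = - Lam <-> exists k, in_Ival del (I k) x) }.

Arguments Lam_pos {Lam del T u I}. Arguments del_pos {Lam del T u I}.
Arguments period_pos {Lam del T u I}. Arguments adm_continuity {Lam del T u I}.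
Arguments adm_periodic {Lam del T u I}. Arguments adm_piecewise_affine {Lam del T u I}.
Arguments adm_slopes {Lam del T u I}. Arguments adm_overlap {Lam del T u I}.
Arguments adm_descent {Lam del T u I}.

Lemma admissible_with_of_admissible Lam del T u : 0 < Lam -> 0 < del -> 0 < T ->
  admissible T Lam del u -> exists I, admissible_with Lam del T u I.
Proof. intros HL Hd HT [A [B [C [D [I [E F]]]]]]. exists I. constructor; auto. Qed.

Definition sawtooth_msq (Lam del : R) := (Lam * del) ^ 2 / 12.

Section Admissible.
Variables (Lam del T : R) (u : R -> R) (I : nat -> R).
Hypothesis HA : admissible_with Lam del T u I.

Definition interval_free a b := forall t, a < t < b -> forall k, ~ in_Ival del (I k) t.

Lemma interval_starts_dist i j : i <> j -> del <= Rabs (I i - I j).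
Proof.
  intros Hij. destruct (Rle_or_lt del (Rabs (I i - I j))) as [h | h]; auto. exfalso.
  destruct (Rabs_def2 _ _ h).
  destruct (Rle_lt_dec (I i) (I j)).
  - assert (I j = I i + del) by (apply (adm_overlap HA i j Hij); unfold in_Ival; lra). lra.
  - assert (I i = I j + del) by (apply (adm_overlap HA i j Hij); unfold in_Ival; lra). lra.
Qed.

Lemma u_on_interval k x : I k <= x <= I k + del -> u x = u (I k) - Lam * (x - I k).
Proof.
  intros Hx. pose proof (del_pos HA).
  assert (Hs : forall t l, I k < t < I k + del -> derivable_pt_lim u t l -> l = - Lam).
  { intros t l Ht Hl. apply (adm_descent HA t l Hl). exists k. unfold in_Ival; lra. }
  rewrite (piecewise_affine_const_slope u (I k) (I k + del) (- Lam)
    (adm_piecewise_affine HA) ltac:(lra) Hs x Hx).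
  ring.
Qed.

Lemma slope1_not_in_interval x : derivable_pt_lim u x 1 -> forall k, ~ in_Ival del (I k) x.
Proof.
  intros Hd k Hk. pose proof (Lam_pos HA).
  assert (1 = - Lam) by (apply (adm_descent HA x 1 Hd); eauto). lra.
Qed.

Lemma u_on_free a b x : interval_free a b -> a < b -> a <= x <= b -> u x = u a + (x - a).
Proof.
  intros Hf Hab Hx.
  assert (Hs : forall t l, a < t < b -> derivable_pt_lim u t l -> l = 1).
  { intros t l Ht Hl. destruct (adm_slopes HA t l Hl) as [| E]; auto. exfalso.
    destruct (proj1 (adm_descent HA t l Hl) E) as [k Hk]. exact (Hf t Ht k Hk). }
  rewrite (piecewise_affine_const_slope u a b 1 (adm_piecewise_affine HA) Hab Hs x Hx). ring.
Qed.

Lemma derivable_on_interval k t : I k < t < I k + del -> derivable_pt_lim u t (- Lam).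
Proof.
  intros Ht. apply (affine_derivable_pt_lim u (I k) (I k + del) (- Lam) (u (I k) + Lam * I k));
    [exact Ht |].
  intros x Hx. rewrite (u_on_interval k x Hx). ring.
Qed.

Lemma derivable_on_free a b t : interval_free a b -> a < t < b -> derivable_pt_lim u t 1.
Proof.
  intros Hf Ht. apply (affine_derivable_pt_lim u a b 1 (u a - a)); [exact Ht |].
  intros x Hx. rewrite (u_on_free a b x Hf) by lra. ring.
Qed.

Lemma exists_slope1 : exists x, derivable_pt_lim u x 1.
Proof.
  pose proof (period_pos HA). pose proof (Lam_pos HA).
  apply NNPP. intros Hn.
  assert (Hdesc : u T = u 0 + (- Lam) * (T - 0)).
  { apply (piecewise_affine_const_slope u 0 T (- Lam) (adm_piecewise_affine HA)); try lra.
    intros t l Ht Hl. destruct (adm_slopes HA t l Hl) as [-> |]; auto. exfalso; eauto. }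
  pose proof (adm_periodic HA 0) as Hp. rewrite Rplus_0_l in Hp. nra.
Qed.

Lemma exists_start_above y : exists k, y <= I k.
Proof.
  pose proof (del_pos HA). pose proof (period_pos HA).
  destruct (INR_archimed T (y - I 0%nat + del) ltac:(lra)) as [n Hn].
  pose proof (periodic_nat_derivable_pt_lim T u n _ _ (adm_periodic HA)
    (derivable_on_interval 0 (I 0%nat + del / 2) ltac:(lra))) as Hd.
  destruct (proj1 (adm_descent HA _ _ Hd) eq_refl) as [k Hk].
  exists k. unfold in_Ival in Hk. lra.
Qed.

Definition is_next_start y z :=
  (exists k, I k = z) /\ y <= z /\ forall k, y <= I k -> z <= I k.

(** The infimum of the starts above [y] is attained, since distinct starts are [del] apart. *)
Lemma next_start_exists y : exists z, is_next_start y z.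
Proof.
  pose proof (del_pos HA).
  set (E := fun r => exists k, y <= I k /\ r = - I k).
  assert (bE : bound E) by (exists (- y); intros r [k [Hk ->]]; lra).
  assert (nE : exists r, E r)
    by (destruct (exists_start_above y) as [k Hk]; exists (- I k), k; auto).
  destruct (completeness E bE nE) as [m [Hub Hlub]].
  assert (Hnear : exists k, y <= I k /\ I k < - m + del).
  { apply NNPP. intros Hn.
    assert (Hm : is_upper_bound E (m - del)).
    { intros r [k [Hk ->]]. destruct (Rlt_or_le (I k) (- m + del)); [| lra].
      exfalso; apply Hn; eauto. }
    specialize (Hlub _ Hm). lra. }
  destruct Hnear as [k [Hk1 Hk2]].
  exists (I k). split; [eauto |]. split; [exact Hk1 |]. intros k' Hk'.
  assert (- I k' <= m) by (apply Hub; exists k'; auto).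
  destruct (Rle_or_lt (I k) (I k')) as [| Hlt]; auto.
  assert (Hkk : k <> k') by (intros ->; lra).
  pose proof (interval_starts_dist k k' Hkk) as Hd. rewrite Rabs_right in Hd by lra. lra.
Qed.

Definition next_start y := epsilon (inhabits 0) (is_next_start y).

Lemma next_start_spec y : is_next_start y (next_start y).
Proof. unfold next_start. apply epsilon_spec, next_start_exists. Qed.

Fixpoint starts (s0 : R) (n : nat) : R :=
  match n with O => s0 | S n => next_start (starts s0 n + del) end.

Lemma starts_step s0 : (exists k, I k = s0) -> forall n,
  (exists k, I k = starts s0 n) /\ starts s0 n + del <= starts s0 (S n) /\
  interval_free (starts s0 n + del) (starts s0 (S n)).
Proof.
  intros H0 n. pose proof (del_pos HA).
  assert (Hst : exists k, I k = starts s0 n)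
    by (destruct n; simpl; [exact H0 | apply next_start_spec]).
  destruct (next_start_spec (starts s0 n + del)) as [_ [B C]].
  split; [exact Hst |]. split; [exact B |].
  intros t Ht k' Hk'. unfold in_Ival in Hk'. simpl in Ht.
  destruct (Rle_or_lt (starts s0 n + del) (I k')) as [Hle | Hlt].
  - specialize (C k' Hle). lra.
  - destruct Hst as [j Hj].
    destruct (Nat.eq_dec k' j) as [-> | Hne]; [lra |].
    pose proof (interval_starts_dist k' j Hne) as Hd. rewrite Hj in Hd.
    destruct (Rle_or_lt (I k') (starts s0 n)).
    + rewrite Rabs_left1 in Hd by lra. lra.
    + rewrite Rabs_right in Hd by lra. lra.
Qed.

Lemma interval_free_shift a b : interval_free a b -> a < b -> interval_free (a + T) (b + T).
Proof.
  intros Hf Hab t Ht. apply slope1_not_in_interval.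
  replace t with ((t - T) + T) by ring.
  apply (periodic_derivable_pt_lim T u _ _ (adm_periodic HA)).
  apply (derivable_on_free a b); [exact Hf | lra].
Qed.

(** A start [s] preceded by a free gap is translated by [T] onto a start: the descent just
    after [s + T] must begin at [s + T], since the gap before it is free. *)
Lemma start_shift_period x s : interval_free x s -> x < s -> (exists j, I j = s) ->
  exists j', I j' = s + T.
Proof.
  intros Hf Hxs [j Hj]. pose proof (del_pos HA).
  pose proof (interval_free_shift x s Hf Hxs) as HfT.
  assert (Hp : forall eps, 0 < eps < del -> exists k, s + T <= I k <= s + T + eps).
  { intros eps He.
    pose proof (periodic_derivable_pt_lim T u _ _ (adm_periodic HA)
      (derivable_on_interval j (s + eps) ltac:(lra))) as Hd.
    destruct (proj1 (adm_descent HA _ _ Hd) eq_refl) as [k Hk].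
    exists k. unfold in_Ival in Hk. split; [| lra].
    destruct (Rle_or_lt (s + T) (I k)) as [| Hlt]; auto. exfalso.
    set (t := (Rmax (I k) (x + T) + (s + T)) / 2).
    pose proof (Rmax_l (I k) (x + T)). pose proof (Rmax_r (I k) (x + T)).
    assert (Rmax (I k) (x + T) < s + T) by (apply Rmax_case_strong; lra).
    apply (HfT t) with k; unfold t, in_Ival; lra. }
  destruct (Hp (del / 2) ltac:(lra)) as [k1 Hk1].
  destruct (Req_dec (I k1) (s + T)) as [E | E]; [eauto |]. exfalso.
  destruct (Hp ((I k1 - (s + T)) / 2) ltac:(lra)) as [k2 Hk2].
  assert (Hne : k1 <> k2) by (intros ->; lra).
  pose proof (interval_starts_dist k1 k2 Hne) as Hd. rewrite Rabs_right in Hd by lra. lra.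
Qed.

Lemma starts_lower_bound s0 : (exists k, I k = s0) ->
  forall n, s0 + INR n * del <= starts s0 n.
Proof.
  intros H0 n. induction n as [| n IH]; [simpl; lra |].
  destruct (starts_step s0 H0 n) as [_ [A _]]. rewrite S_INR. lra.
Qed.

Lemma starts_reach_period s0 : (exists k, I k = s0) -> (exists j, I j = s0 + T) ->
  exists N, starts s0 N = s0 + T.
Proof.
  intros H0 [j Hj]. pose proof (del_pos HA). pose proof (period_pos HA).
  assert (Hlast : exists N, starts s0 N <= s0 + T /\ ~ starts s0 (S N) <= s0 + T).
  { apply NNPP. intros Hn.
    assert (Hall : forall n, starts s0 n <= s0 + T).
    { induction n as [| n IH]; [simpl; lra |]. apply NNPP. intros Hc. apply Hn. eauto. }
    destruct (INR_archimed del T ltac:(lra)) as [m Hm].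
    pose proof (Hall m). pose proof (starts_lower_bound s0 H0 m). lra. }
  destruct Hlast as [N [HP HnP]]. exists N.
  destruct (Req_dec (starts s0 N) (s0 + T)) as [| Hne]; auto. exfalso. apply HnP.
  destruct (starts_step s0 H0 N) as [[k Hk] _].
  assert (Hkj : k <> j) by (intros ->; lra).
  pose proof (interval_starts_dist k j Hkj) as Hd. rewrite Hk, Hj, Rabs_left1 in Hd by lra.
  destruct (next_start_spec (starts s0 N + del)) as [_ [_ C]].
  simpl. rewrite <- Hj. apply C. lra.
Qed.

Lemma exists_periodic_starts :
  exists s0, (exists k, I k = s0) /\ exists N, starts s0 N = s0 + T.
Proof.
  destruct exists_slope1 as [x1 Hx1].
  pose proof (slope1_not_in_interval x1 Hx1) as Hn. pose proof (del_pos HA).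
  destruct (next_start_spec x1) as [[k Hk] [B C]].
  set (s0 := next_start x1) in *.
  assert (Hlt : x1 < s0).
  { destruct B as [| E]; auto. exfalso. apply (Hn k). rewrite Hk, <- E. unfold in_Ival. lra. }
  assert (Hf : interval_free x1 s0).
  { intros t Ht k' Hk'. unfold in_Ival in Hk'. destruct (Rle_or_lt x1 (I k')).
    - specialize (C k' ltac:(lra)). lra.
    - apply (Hn k'). unfold in_Ival. lra. }
  exists s0. split; [eauto |]. apply starts_reach_period; [eauto |].
  apply (start_shift_period x1 s0); eauto.
Qed.

Lemma u_on_cell_descent s0 n x : (exists k, I k = s0) ->
  starts s0 n <= x <= starts s0 n + del ->
  u x = u (starts s0 n) - Lam * (x - starts s0 n).
Proof.
  intros H0 Hx. destruct (starts_step s0 H0 n) as [[k Hk] _].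
  rewrite <- Hk in *. apply u_on_interval. exact Hx.
Qed.

Lemma u_on_cell_ascent s0 n x : (exists k, I k = s0) ->
  starts s0 n + del <= x <= starts s0 (S n) ->
  u x = u (starts s0 n) - Lam * del + (x - starts s0 n - del).
Proof.
  intros H0 Hx. destruct (starts_step s0 H0 n) as [_ [A B]]. pose proof (del_pos HA).
  assert (Hd : u (starts s0 n + del) = u (starts s0 n) - Lam * del)
    by (rewrite (u_on_cell_descent s0 n) by (auto; lra); ring).
  destruct (Req_dec x (starts s0 n + del)) as [-> | Hne]; [rewrite Hd; ring |].
  rewrite (u_on_free (starts s0 n + del) (starts s0 (S n)) x B) by lra.
  rewrite Hd. ring.
Qed.

Lemma integral_over_cells s0 : (exists k, I k = s0) -> forall n,
  let h j := u (starts s0 j) in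
  starts s0 n - s0 = INR n * (1 + Lam) * del + h n - h 0%nat /\
  is_RInt (fun x => u x ^ 2) s0 (starts s0 n)
    ((1 + Lam) * del * (sum_sq (fun j => h j - Lam * del / 2) n + INR n * sawtooth_msq Lam del)
     + (h n ^ 3 - h 0%nat ^ 3) / 3).
Proof.
  intros H0 n h. pose proof (del_pos HA). pose proof (Lam_pos HA).
  induction n as [| n [E1 E2]].
  - split; [simpl; lra |].
    match goal with |- is_RInt _ _ _ ?v => replace v with 0 by (simpl; field) end.
    apply (@is_RInt_point R_NormedModule).
  - destruct (starts_step s0 H0 n) as [_ [A _]].
    set (s := starts s0 n) in *. set (s' := starts s0 (S n)) in *.
    assert (Hs' : h (S n) = h n - Lam * del + (s' - s - del))
      by (unfold h; fold s'; rewrite (u_on_cell_ascent s0 n s') by (auto; fold s s'; lra); reflexivity).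
    split; [rewrite S_INR; lra |].
    assert (Desc : is_RInt (fun x => u x ^ 2) s (s + del)
      (((h n + (- Lam) * ((s + del) - s)) ^ 3 - h n ^ 3) / (3 * (- Lam)))).
    { apply (is_RInt_ext (fun x => (h n + (- Lam) * (x - s)) ^ 2)); [| apply is_RInt_affine_sq; lra].
      intros x Hx. rewrite Rmin_left in Hx by lra. rewrite Rmax_right in Hx by lra.
      unfold h. rewrite (u_on_cell_descent s0 n x) by (auto; fold s; lra). fold s. f_equal. ring. }
    assert (Asc : is_RInt (fun x => u x ^ 2) (s + del) s'
      (((h n - Lam * del + 1 * (s' - (s + del))) ^ 3 - (h n - Lam * del) ^ 3) / (3 * 1))).
    { apply (is_RInt_ext (fun x => (h n - Lam * del + 1 * (x - (s + del))) ^ 2));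
        [| apply is_RInt_affine_sq; lra].
      intros x Hx. rewrite Rmin_left in Hx by lra. rewrite Rmax_right in Hx by lra.
      unfold h. rewrite (u_on_cell_ascent s0 n x) by (auto; fold s s'; lra). fold s. f_equal. ring. }
    pose proof (is_RInt_Chasles _ _ _ _ _ _ (is_RInt_Chasles _ _ _ _ _ _ E2 Desc) Asc) as C.
    match type of C with is_RInt _ _ _ ?v => match goal with |- is_RInt _ _ _ ?w =>
      replace w with v; [exact C |] end end.
    rewrite S_INR. change (sum_sq ?f (S n)) with (sum_sq f n + f n ^ 2).
    unfold plus, sawtooth_msq; simpl. rewrite Hs'. field. lra.
Qed.

Lemma integral_over_period : exists s0 N,
  (exists k, I k = s0) /\ starts s0 N = s0 + T /\ T = INR N * (1 + Lam) * del /\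
  RInt (fun x => u x ^ 2) 0 T =
    T * sawtooth_msq Lam del
    + (1 + Lam) * del * sum_sq (fun j => u (starts s0 j) - Lam * del / 2) N.
Proof.
  destruct exists_periodic_starts as [s0 [Hs0 [N HN]]].
  exists s0, N. split; [exact Hs0 |]. split; [exact HN |].
  destruct (integral_over_cells s0 Hs0 N) as [E1 E2]. cbv beta zeta in E1, E2.
  rewrite HN in E1, E2. simpl starts in E1, E2. rewrite (adm_periodic HA s0) in E1, E2.
  assert (ET : T = INR N * (1 + Lam) * del) by lra.
  split; [exact ET |].
  rewrite (RInt_periodic_shift _ T s0).
  - rewrite (is_RInt_unique _ _ _ _ E2), ET.
    match goal with |- ?a = ?b => change (@eq R a b) end. field.
  - intros x. simpl. rewrite (adm_periodic HA x). reflexivity.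
  - apply continuous_sq, (adm_continuity HA).
Qed.

End Admissible.

Lemma F0_admissible Lam del T u : 0 < Lam -> 0 < del -> 0 < T -> admissible T Lam del u ->
  exists I s0 N, admissible_with Lam del T u I /\ (exists k, I k = s0) /\
  starts del I s0 N = s0 + T /\ T = INR N * (1 + Lam) * del /\
  F0 T u = sawtooth_msq Lam del / 2
    + (1 + Lam) * del / (2 * T) * sum_sq (fun j => u (starts del I s0 j) - Lam * del / 2) N.
Proof.
  intros HL Hd HT Ha. destruct (admissible_with_of_admissible Lam del T u HL Hd HT Ha) as [I HA].
  destruct (integral_over_period Lam del T u I HA) as [s0 [N [A [B [C D]]]]].
  exists I, s0, N. do 4 (split; [assumption |]). unfold F0. rewrite D. field. lra.
Qed.

Lemma F0_admissible_ge Lam del T u : 0 < Lam -> 0 < del -> 0 < T -> admissible T Lam del u ->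
  sawtooth_msq Lam del / 2 <= F0 T u.
Proof.
  intros HL Hd HT Ha.
  destruct (F0_admissible Lam del T u HL Hd HT Ha) as [I [s0 [N [_ [_ [_ [_ ->]]]]]]].
  pose proof (sum_sq_ge0 (fun j => u (starts del I s0 j) - Lam * del / 2) N).
  assert (0 <= (1 + Lam) * del / (2 * T)) by (apply Rle_mult_inv_pos; nra).
  nra.
Qed.

(** * The sawtooth *)

Lemma frac_part_of_bounds z (k : Z) : IZR k <= z < IZR k + 1 -> frac_part z = z - IZR k.
Proof.
  intros Hz. unfold frac_part, Int_part.
  assert (E : up z = (k + 1)%Z) by (symmetry; apply tech_up; rewrite plus_IZR; simpl; lra).
  rewrite E, minus_IZR, plus_IZR. simpl. ring.
Qed.

Section Sawtooth.
Variables (Lam del : R).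
Hypotheses (HL : 0 < Lam) (Hd : 0 < del).
Let P := (Lam + 1) * del.

Let P_pos : 0 < P.
Proof. unfold P; nra. Qed.

Lemma ubar_red_eq y (k : Z) : IZR k * P - del < y <= IZR k * P + Lam * del ->
  ubar_red Lam del y = y - IZR k * P.
Proof.
  intros Hy. unfold ubar_red. fold P.
  assert (E : (Lam * del - y) / P * P = Lam * del - y) by (field; lra).
  rewrite (frac_part_of_bounds _ (- k)).
  - rewrite opp_IZR. field. lra.
  - rewrite opp_IZR. unfold P in *. split; nra.
Qed.

Lemma ubar_on_descent y (k : Z) : IZR k * P - del <= y <= IZR k * P ->
  ubar Lam del y = - Lam * (y - IZR k * P).
Proof.
  intros Hy. unfold ubar.
  destruct (Req_dec y (IZR k * P - del)) as [-> | Hne].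
  - rewrite (ubar_red_eq _ (k - 1)); rewrite minus_IZR; simpl; unfold P in *.
    + destruct (Rlt_dec _ _); [nra | ring].
    + split; nra.
  - rewrite (ubar_red_eq y k) by (split; [lra | nra]).
    destruct (Rlt_dec _ _); [ring |]. replace y with (IZR k * P) by lra. ring.
Qed.

Lemma ubar_on_ascent y (k : Z) : IZR k * P <= y <= IZR k * P + Lam * del ->
  ubar Lam del y = y - IZR k * P.
Proof.
  intros Hy. unfold ubar. rewrite (ubar_red_eq y k) by lra. destruct (Rlt_dec _ _); lra.
Qed.

Lemma sawtooth_tooth y : exists k : Z, IZR k * P - del <= y <= IZR k * P + Lam * del.
Proof.
  destruct (Z_window (- del) P y P_pos) as [z Hz]. exists (- z)%Z. rewrite opp_IZR.
  unfold P in *. lra.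
Qed.

Lemma ubar_periodic : periodic P (ubar Lam del).
Proof.
  intros y. destruct (sawtooth_tooth y) as [k Hk].
  destruct (Rle_or_lt y (IZR k * P)).
  - rewrite (ubar_on_descent y k), (ubar_on_descent (y + P) (k + 1)) by (rewrite ?plus_IZR; lra).
    rewrite plus_IZR. ring.
  - rewrite (ubar_on_ascent y k), (ubar_on_ascent (y + P) (k + 1)) by (rewrite ?plus_IZR; lra).
    rewrite plus_IZR. ring.
Qed.

Lemma ubar_bounds y : 0 <= ubar Lam del y <= Lam * del.
Proof.
  destruct (sawtooth_tooth y) as [k Hk]. destruct (Rle_or_lt y (IZR k * P)).
  - rewrite (ubar_on_descent y k) by lra. nra.
  - rewrite (ubar_on_ascent y k) by lra. lra.
Qed.

End Sawtooth.

Definition centered_sawtooth (Lam del x0 x : R) := ubar Lam del (x - x0) - Lam * del / 2.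

Section CenteredSawtooth.
Variables (Lam del x0 : R).
Hypotheses (HL : 0 < Lam) (Hd : 0 < del).
Let P := (Lam + 1) * del.
Let w := centered_sawtooth Lam del x0.

Let P_pos : 0 < P.
Proof. unfold P; nra. Qed.

Definition on_descent (k : Z) x := IZR k * ((Lam + 1) * del) - del <= x - x0 <= IZR k * ((Lam + 1) * del).

Lemma on_descent_unique a b x : on_descent a x -> on_descent b x -> a = b.
Proof.
  unfold on_descent. fold P. intros Ha Hb.
  assert (IZR a * P < (IZR b + 1) * P) by (unfold P in *; nra).
  assert (IZR b * P < (IZR a + 1) * P) by (unfold P in *; nra).
  assert (Hab : IZR a < IZR (b + 1)) by (rewrite plus_IZR; apply (Rmult_lt_reg_r P); auto).
  assert (Hba : IZR b < IZR (a + 1)) by (rewrite plus_IZR; apply (Rmult_lt_reg_r P); auto).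
  apply lt_IZR in Hab, Hba. lia.
Qed.

Lemma centered_sawtooth_descent k x : IZR k * P - del <= x - x0 <= IZR k * P ->
  w x = - Lam * x + (Lam * (x0 + IZR k * P) - Lam * del / 2).
Proof.
  intros. unfold w, centered_sawtooth. rewrite (ubar_on_descent Lam del HL Hd _ k) by auto.
  unfold P. ring.
Qed.

Lemma centered_sawtooth_ascent k x : IZR k * P <= x - x0 <= IZR k * P + Lam * del ->
  w x = 1 * x + (- (x0 + IZR k * P) - Lam * del / 2).
Proof.
  intros. unfold w, centered_sawtooth. rewrite (ubar_on_ascent Lam del HL Hd _ k) by auto.
  unfold P. ring.
Qed.

Lemma not_on_descent k z : IZR k * P < z - x0 < IZR k * P + Lam * del -> forall j, ~ on_descent j z.
Proof.
  intros Hz j Hj. unfold on_descent in Hj. fold P in Hj.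
  assert (IZR j * P < (IZR k + 1) * P) by (unfold P in *; nra).
  assert (Hjk : IZR j < IZR (k + 1)) by (rewrite plus_IZR; apply (Rmult_lt_reg_r P); auto).
  apply lt_IZR in Hjk.
  assert (IZR j <= IZR k) by (apply IZR_le; lia).
  assert (IZR j * P <= IZR k * P) by (apply Rmult_le_compat_r; lra). lra.
Qed.

Ltac close_side k := first
  [ intros; exfalso; lra
  | intros y Hy; apply centered_sawtooth_descent;
    (lra || (rewrite ?plus_IZR, ?minus_IZR; simpl; unfold P in *; nra))
  | intros y Hy; apply centered_sawtooth_ascent;
    (lra || (rewrite ?plus_IZR, ?minus_IZR; simpl; unfold P in *; nra))
  | intros _ _; exists k; unfold on_descent; fold P; lra
  | intros _ _; apply not_on_descent with k; lra ].

(** Five cases: inside a descent, inside an ascent, and the three kinds of corners. *)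
Lemma centered_sawtooth_local x : exists eta m1 c1 m2 c2,
  0 < eta /\ (m1 = 1 \/ m1 = - Lam) /\ (m2 = 1 \/ m2 = - Lam) /\
  (forall y, x - eta <= y <= x -> w y = m1 * y + c1) /\
  (forall y, x <= y <= x + eta -> w y = m2 * y + c2) /\
  (m1 = - Lam -> m2 = - Lam -> exists k, on_descent k x) /\
  (m1 = 1 -> m2 = 1 -> forall k, ~ on_descent k x).
Proof.
  destruct (sawtooth_tooth Lam del HL Hd (x - x0)) as [k Hk]. fold P in Hk.
  assert (HLd : 0 < Lam * del) by nra.
  set (cd := Lam * (x0 + IZR k * P) - Lam * del / 2).
  set (ca := - (x0 + IZR k * P) - Lam * del / 2).
  set (eta := Rmin del (Lam * del)).
  assert (0 < eta) by (apply Rmin_pos; lra).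
  assert (eta <= del) by apply Rmin_l. assert (eta <= Lam * del) by apply Rmin_r.
  destruct (Rlt_or_le (x - x0) (IZR k * P)); [destruct (Rlt_or_le (IZR k * P - del) (x - x0)) |].
  - set (e := Rmin (x - x0 - (IZR k * P - del)) (IZR k * P - (x - x0))).
    assert (0 < e) by (apply Rmin_pos; lra).
    assert (e <= x - x0 - (IZR k * P - del)) by apply Rmin_l.
    assert (e <= IZR k * P - (x - x0)) by apply Rmin_r.
    exists e, (- Lam), cd, (- Lam), cd.
    repeat split; auto; try lra; close_side k.
  - exists eta, 1, (- (x0 + IZR (k - 1) * P) - Lam * del / 2), (- Lam), cd.
    repeat split; auto; try lra; close_side k.
  - destruct (Rlt_or_le (x - x0) (IZR k * P + Lam * del)); [destruct (Rlt_or_le (IZR k * P) (x - x0)) |].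
    + set (e := Rmin (x - x0 - IZR k * P) (IZR k * P + Lam * del - (x - x0))).
      assert (0 < e) by (apply Rmin_pos; lra).
      assert (e <= x - x0 - IZR k * P) by apply Rmin_l.
      assert (e <= IZR k * P + Lam * del - (x - x0)) by apply Rmin_r.
      exists e, 1, ca, 1, ca.
      repeat split; auto; try lra; close_side k.
    + exists eta, (- Lam), cd, 1, ca.
      repeat split; auto; try lra; close_side k.
    + exists eta, 1, ca, (- Lam), (Lam * (x0 + IZR (k + 1) * P) - Lam * del / 2).
      repeat split; auto; try lra; close_side k.
Qed.

Lemma centered_sawtooth_continuity : continuity w.
Proof.
  intros x. destruct (centered_sawtooth_local x) as [eta [m1 [c1 [m2 [c2 [He [_ [_ [A [B _]]]]]]]]]].
  eapply affine_sides_continuity_pt; eauto.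
Qed.

Lemma centered_sawtooth_derivable x l : derivable_pt_lim w x l ->
  (l = 1 \/ l = - Lam) /\ (l = - Lam <-> exists k, on_descent k x).
Proof.
  intros Hdl.
  destruct (centered_sawtooth_local x) as [eta [m1 [c1 [m2 [c2 [He [Hm1 [Hm2 [A [B [C D]]]]]]]]]]].
  assert (l = m1) by (eapply affine_left_derivable_pt_lim_eq; eauto).
  assert (l = m2) by (eapply affine_right_derivable_pt_lim_eq; eauto). subst.
  split; [exact Hm1 |]. split; [intros E; apply C; congruence |].
  intros [k Hk]. destruct Hm1 as [E |]; auto. exfalso. exact (D E E k Hk).
Qed.

Lemma centered_sawtooth_piecewise_affine : piecewise_affine w.
Proof.
  assert (HLd : 0 < Lam * del) by nra.
  apply (piecewise_affine_of_short w (Rmin del (Lam * del))); [apply Rmin_pos; lra |].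
  intros a b Hab. assert (Rmin del (Lam * del) <= del) by apply Rmin_l.
  assert (Rmin del (Lam * del) <= Lam * del) by apply Rmin_r.
  assert (Hnext : forall k : Z, IZR (k + 1) * P = IZR k * P + Lam * del + del)
    by (intros; rewrite plus_IZR; unfold P; ring).
  destruct (sawtooth_tooth Lam del HL Hd (a - x0)) as [k Hk]. fold P in Hk.
  pose proof (Hnext k).
  destruct (Rlt_or_le (a - x0) (IZR k * P));
    [| destruct (Rlt_or_le (a - x0) (IZR k * P + Lam * del))].
  - destruct (Rle_or_lt b (x0 + IZR k * P)).
    + eapply piecewise_affine_on_affine; [lra |]. intros x Hx. apply (centered_sawtooth_descent k). lra.
    + apply piecewise_affine_on_trans with (x0 + IZR k * P).
      * eapply piecewise_affine_on_affine; [lra |]. intros x Hx. apply (centered_sawtooth_descent k). lra.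
      * eapply piecewise_affine_on_affine; [lra |]. intros x Hx. apply (centered_sawtooth_ascent k). lra.
  - destruct (Rle_or_lt b (x0 + IZR k * P + Lam * del)).
    + eapply piecewise_affine_on_affine; [lra |]. intros x Hx. apply (centered_sawtooth_ascent k). lra.
    + apply piecewise_affine_on_trans with (x0 + IZR k * P + Lam * del).
      * eapply piecewise_affine_on_affine; [lra |]. intros x Hx. apply (centered_sawtooth_ascent k). lra.
      * eapply piecewise_affine_on_affine; [lra |]. intros x Hx.
        apply (centered_sawtooth_descent (k + 1)). lra.
  - eapply piecewise_affine_on_affine; [lra |]. intros x Hx.
    apply (centered_sawtooth_descent (k + 1)). lra.
Qed.

End CenteredSawtooth.

(** [admissible] indexes the descent intervals by [nat], those of the sawtooth are indexed by [Z]. *)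
Definition Z_of_nat_enum (n : nat) : Z :=
  if Nat.even n then Z.of_nat (Nat.div2 n) else (- Z.of_nat (S (Nat.div2 n)))%Z.

Lemma Z_of_nat_enum_inj i j : Z_of_nat_enum i = Z_of_nat_enum j -> i = j.
Proof.
  unfold Z_of_nat_enum. pose proof (Nat.div2_odd i) as Hi. pose proof (Nat.div2_odd j) as Hj.
  rewrite <- Nat.negb_even in Hi, Hj.
  destruct (Nat.even i), (Nat.even j); simpl in *; intros; lia.
Qed.

Lemma Z_of_nat_enum_surj k : exists n, Z_of_nat_enum n = k.
Proof.
  unfold Z_of_nat_enum. destruct (Z.le_gt_cases 0 k).
  - exists (2 * Z.to_nat k)%nat. rewrite Nat.even_mul, Nat.div2_double. simpl. lia.
  - exists (S (2 * (Z.to_nat (- k) - 1)))%nat.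
    rewrite Nat.even_succ, <- Nat.negb_even, Nat.even_mul, Nat.div2_succ_double. simpl. lia.
Qed.

Lemma centered_sawtooth_admissible Lam del x0 L : 0 < Lam -> 0 < del ->
  admissible (INR L * (Lam + 1) * del) Lam del (centered_sawtooth Lam del x0).
Proof.
  intros HL Hd.
  split; [| split; [| split; [| split]]].
  - apply centered_sawtooth_continuity; auto.
  - intros x. unfold centered_sawtooth.
    replace (x + INR L * (Lam + 1) * del - x0) with ((x - x0) + INR L * ((Lam + 1) * del)) by ring.
    rewrite (periodic_nat_mul _ _ (ubar_periodic Lam del HL Hd)). reflexivity.
  - apply centered_sawtooth_piecewise_affine; auto.
  - intros x l Hl. apply (centered_sawtooth_derivable Lam del x0 HL Hd x l Hl).
  - exists (fun n => x0 + IZR (Z_of_nat_enum n) * ((Lam + 1) * del) - del). split.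
    + intros i j Hij x y Hi Hj _ _. exfalso. apply Hij, Z_of_nat_enum_inj.
      apply (on_descent_unique Lam del x0 HL Hd _ _ x); unfold on_descent, in_Ival in *; lra.
    + intros x l Hl. destruct (centered_sawtooth_derivable Lam del x0 HL Hd x l Hl) as [_ ->].
      split.
      * intros [k Hk]. destruct (Z_of_nat_enum_surj k) as [n <-].
        exists n. unfold on_descent, in_Ival in *. lra.
      * intros [n Hn]. exists (Z_of_nat_enum n). unfold on_descent, in_Ival in *. lra.
Qed.

(** The heights [h_j] of a sawtooth are [Lam del / 2]: both [h_j] and [h_j - Lam del]
    lie in [[- Lam del / 2, Lam del / 2]]. *)
Lemma F0_centered_sawtooth Lam del L x0 : 0 < Lam -> 0 < del -> (1 <= L)%nat ->
  F0 (INR L * (Lam + 1) * del) (centered_sawtooth Lam del x0) = sawtooth_msq Lam del / 2.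
Proof.
  intros HL Hd HLn. set (T := INR L * (Lam + 1) * del). set (w := centered_sawtooth Lam del x0).
  assert (HT : 0 < T)
    by (unfold T; pose proof (le_INR 1 L HLn); simpl in *; apply Rmult_lt_0_compat; nra).
  destruct (F0_admissible Lam del T w HL Hd HT (centered_sawtooth_admissible Lam del x0 L HL Hd))
    as [I [s0 [N [HA [Hs0 [_ [_ ->]]]]]]].
  rewrite sum_sq_eq0; [ring |]. intros j _.
  set (s := starts del I s0 j).
  assert (Hb : forall y, - (Lam * del / 2) <= w y <= Lam * del / 2)
    by (intros y; unfold w, centered_sawtooth; pose proof (ubar_bounds Lam del HL Hd (y - x0)); lra).
  pose proof (u_on_cell_descent Lam del T w I HA s0 j (s + del) Hs0 ltac:(fold s; lra)) as Hdesc.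
  fold s in Hdesc. pose proof (Hb s). pose proof (Hb (s + del)). nra.
Qed.

(** * Minimizers *)

Lemma cell_of_nondecreasing (s : nat -> R) N y : (1 <= N)%nat ->
  (forall n, s n <= s (S n)) -> s 0%nat <= y <= s N ->
  exists j, (j < N)%nat /\ s j <= y <= s (S j).
Proof.
  intros HN Hs Hy. induction N as [| N IH]; [lia |].
  destruct (Rle_or_lt y (s N)) as [Hle | Hlt].
  - destruct (Nat.eq_dec N 0) as [-> | HN0]; [exists 0%nat; split; [lia | lra] |].
    destruct (IH ltac:(lia) ltac:(lra)) as [j [Hj Hjy]]. exists j. split; [lia | exact Hjy].
  - exists N. split; [lia | lra].
Qed.

Section Rigidity.
Variables (Lam del T : R) (u : R -> R) (I : nat -> R) (s0 : R) (N : nat).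
Hypotheses (HA : admissible_with Lam del T u I) (Hs0 : exists k, I k = s0)
  (HN : starts del I s0 N = s0 + T)
  (Hheights : forall j, (j < N)%nat -> u (starts del I s0 j) = Lam * del / 2).

Lemma starts_equally_spaced n : (n <= N)%nat ->
  starts del I s0 n = s0 + INR n * ((Lam + 1) * del).
Proof.
  intros Hn.
  destruct (integral_over_cells Lam del T u I HA s0 Hs0 n) as [E _]. cbv beta in E.
  assert (Hh0 : u s0 = Lam * del / 2).
  { destruct (Nat.eq_dec N 0) as [-> | HN0].
    - pose proof (period_pos HA). simpl in HN. lra.
    - apply (Hheights 0%nat). lia. }
  assert (Hhn : u (starts del I s0 n) = Lam * del / 2).
  { destruct (Nat.eq_dec n N) as [-> | HnN]; [| apply Hheights; lia].
    rewrite HN, (adm_periodic HA). exact Hh0. }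
  simpl in E. lra.
Qed.

Lemma u_eq_centered_sawtooth_window y : s0 <= y <= s0 + T ->
  u y = centered_sawtooth Lam del (s0 + del) y.
Proof.
  intros Hy. pose proof (del_pos HA). pose proof (Lam_pos HA). pose proof (period_pos HA).
  assert (HN1 : (1 <= N)%nat) by (destruct N; [simpl in HN; lra | lia]).
  assert (Hmono : forall n, starts del I s0 n <= starts del I s0 (S n))
    by (intros n; destruct (starts_step Lam del T u I HA s0 Hs0 n) as [_ [A _]]; lra).
  destruct (cell_of_nondecreasing _ N y HN1 Hmono ltac:(simpl; lra)) as [j [Hj Hjy]].
  pose proof (starts_equally_spaced j ltac:(lia)) as Ej.
  pose proof (starts_equally_spaced (S j) Hj) as ESj. rewrite S_INR in ESj.
  assert (EZ : IZR (Z.of_nat j) = INR j) by (symmetry; apply INR_IZR_INZ).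
  unfold centered_sawtooth.
  destruct (Rle_or_lt y (starts del I s0 j + del)).
  - rewrite (u_on_cell_descent Lam del T u I HA s0 j y Hs0) by lra.
    rewrite Hheights, Ej by exact Hj.
    rewrite (ubar_on_descent Lam del (Lam_pos HA) (del_pos HA) _ (Z.of_nat j)) by (rewrite EZ; lra).
    rewrite EZ. field.
  - rewrite (u_on_cell_ascent Lam del T u I HA s0 j y Hs0) by lra.
    rewrite Hheights, Ej by exact Hj.
    rewrite (ubar_on_ascent Lam del (Lam_pos HA) (del_pos HA) _ (Z.of_nat j)) by (rewrite EZ; nra).
    rewrite EZ. field.
Qed.

End Rigidity.

Lemma F0_admissible_le_rigid Lam del T u : 0 < Lam -> 0 < del -> 0 < T ->
  admissible T Lam del u -> F0 T u <= sawtooth_msq Lam del / 2 ->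
  exists x0, forall x, u x = centered_sawtooth Lam del x0 x.
Proof.
  intros HL Hd HT Ha Hle.
  destruct (F0_admissible Lam del T u HL Hd HT Ha) as [I [s0 [N [HA [Hs0 [HN [HTN E]]]]]]].
  assert (Hc : 0 < (1 + Lam) * del / (2 * T)) by (apply Rdiv_lt_0_compat; nra).
  pose proof (sum_sq_ge0 (fun j => u (starts del I s0 j) - Lam * del / 2) N).
  assert (Hheights : forall j, (j < N)%nat -> u (starts del I s0 j) = Lam * del / 2).
  { intros j Hj. apply Rminus_diag_uniq. revert j Hj. apply sum_sq_le0. nra. }
  exists (s0 + del).
  destruct (centered_sawtooth_admissible Lam del (s0 + del) N HL Hd) as [_ [Hper _]].
  replace (INR N * (Lam + 1) * del) with T in Hper by lra.
  apply (periodic_eq_of_window u _ T s0 HT (adm_periodic HA) Hper).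
  exact (u_eq_centered_sawtooth_window Lam del T u I s0 N HA Hs0 HN Hheights).
Qed.

Theorem theorem1p6 (Lambda delta : R) (L : nat) :
  0 < Lambda -> 0 < delta -> (1 <= L)%nat ->
  forall u : R -> R,
    is_minimizer (INR L * (Lambda + 1) * delta) Lambda delta u <->
    exists x0 : R, forall x : R,
      u x = ubar Lambda delta (x - x0) - Lambda * delta / 2.
Proof.
  intros HL Hd HLn u. set (T := INR L * (Lambda + 1) * delta).
  assert (HT : 0 < T)
    by (unfold T; pose proof (le_INR 1 L HLn); simpl in *; apply Rmult_lt_0_compat; nra).
  split.
  - intros [Ha Hmin]. apply (F0_admissible_le_rigid Lambda delta T u HL Hd HT Ha).
    rewrite <- (F0_centered_sawtooth Lambda delta L 0 HL Hd HLn).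
    apply Hmin, centered_sawtooth_admissible; assumption.
  - intros [x0 Hx0].
    replace u with (centered_sawtooth Lambda delta x0) by (symmetry; apply functional_extensionality, Hx0).
    split; [apply centered_sawtooth_admissible; assumption |].
    intros v Hv. unfold T. rewrite (F0_centered_sawtooth Lambda delta L x0 HL Hd HLn).
    apply F0_admissible_ge; assumption.
Qed.
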